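(* Fix $Y$, $q>0$, $\delta>0$, $\rho\in\mathbb R$, and let $(a^*,b^* )=(a^*(\beta),b^*(\beta))$ be the selected pair as a function of $\beta\in(0,1)$. Then: 1. If $q\rho/\delta<1$, then $b^*(\beta)>0$ for all sufficiently small $\beta$, and $b^*(\beta)\to\infty$ as $\beta\downarrow0$. 2. If $q\rho/\delta>1$, then $a^*(\beta)=b^*(\beta)=0$ for all sufficiently small $\beta>0$. 3. If $q\rho/\delta=1$ and $\psi_X'(0+)<0$, then $b^*(\beta)>0$ for all $\beta\in(0,1)$. Moreover, as $\beta\downarrow0$, $b^*(\beta)\to(\overline Z^{(q)})^{-1}(-\psi_X'(0+)/q)$ and $a^*(\beta)\to0$. 4. If $q\rho/\delta=1$ and $\psi_X'(0+)\ge0$, then $a^*(\beta)=b^*(\beta)=0$ for all $\beta\in(0,1)$.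
   Context: Let $Y$ be a spectrally positive Lévy process (not a subordinator) with Laplace exponent $\psi_Y(\theta)=\log\mathbb E[e^{-\theta Y_1}]$ and $\mathbb E[Y_1]=-\psi_Y'(0+)<\infty$. Let $q>0$, $\delta>0$, and $\psi_X(\theta)=\psi_Y(\theta)+\delta\theta$. The scale functions $\mathbb W^{(q)},W^{(q)}$ vanish on $(-\infty,0)$, are continuous and strictly increasing on $[0,\infty)$, and have Laplace transforms $1/(\psi_Y(\theta)-q)$ and $1/(\psi_X(\theta)-q)$. Let $\mathbb Z^{(q)}(x)=1+q\int_0^x\mathbb W^{(q)}$, $Z^{(q)}(x)=1+q\int_0^xW^{(q)}$, $\overline Z^{(q)}(x)=\int_0^xZ^{(q)}$ (strictly increasing from $0$ to $\infty$ on $[0,\infty)$), and $R^{(q)}(z)=\overline Z^{(q)}(z)+\psi_X'(0+)/q$. Let $\tilde r^{(q)}_c(z)=R^{(q)}(z)+\delta\int_c^z\mathbb W^{(q)}(z-y)Z^{(q)}(y)\,dy$. For $\beta\in(0,1)$ and $\rho\in\mathbb R$, let $\Gamma(a,b)=\delta\mathbb Z^{(q)}(a)-q\rho-q\beta\tilde r^{(q)}_{b-a}(b)$ for $0\le a\le b$. Selected pair: if $\Gamma(0,0)=\delta-q\rho-\beta\psi_X'(0+)\le0$, then $a^*=b^*=0$. Otherwise, $b^*>0$ is the unique root of $\min_{0\le a\le b^*}\Gamma(a,b^* )=0$, and $a^*$ is the unique minimizer of $a\mapsto\Gamma(a,b^* )$ on $[0,b^*]$. *)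

From Stdlib Require Import Reals ClassicalEpsilon.
Open Scope R_scope.

(* Total Riemann integral: RiemannInt when f is Riemann integrable on [a,b]
   (oriented, as in Stdlib), 0 otherwise (never used on non-integrable data). *)
Definition Rint (f : R -> R) (a b : R) : R :=
  match excluded_middle_informative (inhabited (Riemann_integrable f a b)) with
  | left H =>
      RiemannInt (proj1_sig (constructive_indefinite_description
                   (fun _ : Riemann_integrable f a b => True)
                   (match H with inhabits p => ex_intro _ p I end)))
  | right _ => 0
  end.

(* psi is the Laplace exponent psi(t) = log E[exp(-t Y_1)], t >= 0, of a
   spectrally positive Levy process Y with finite mean and psi'(0+) = m,
   which is not a subordinator.  Analytic (Levy-Khintchine / Bernstein)
   characterization. *)
Definition spec_pos_laplace_exponent (psi : R -> R) (m : R) : Prop :=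
  psi 0 = 0 /\
  (exists D : nat -> R -> R,
      (forall t, 0 < t -> D O t = psi t) /\
      (forall n t, 0 < t -> derivable_pt_lim (D n) t (D (S n) t)) /\
      (forall n t, 0 < t -> 0 <= (-1) ^ n * D (S (S n)) t)) /\
  (forall eps, 0 < eps -> exists d, 0 < d /\
      forall t, 0 < t < d -> Rabs (psi t / t - m) < eps) /\
  (exists t, 0 < t /\ 0 < psi t).

Definition is_scale_function (psi : R -> R) (q : R) (W : R -> R) : Prop :=
  (forall x, x < 0 -> W x = 0) /\
  (forall x, 0 <= x -> limit1_in W (fun y => 0 <= y) (W x) x) /\
  (forall x y, 0 <= x -> x < y -> W x < W y) /\
  (exists t0, forall t, t0 < t ->
     forall eps, 0 < eps -> exists M, forall T, M < T ->
       Rabs (Rint (fun x => exp (- t * x) * W x) 0 T - / (psi t - q)) < eps).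

Definition ZZq (q : R) (WW : R -> R) (x : R) : R := 1 + q * Rint WW 0 x.
Definition Zq (q : R) (W : R -> R) (x : R) : R := 1 + q * Rint W 0 x.
Definition Zbarq (q : R) (W : R -> R) (x : R) : R := Rint (Zq q W) 0 x.
(* dX stands for psi_X'(0+) *)
Definition Rq (q : R) (W : R -> R) (dX : R) (z : R) : R := Zbarq q W z + dX / q.
Definition rtilde (q delta : R) (W WW : R -> R) (dX c z : R) : R :=
  Rq q W dX z + delta * Rint (fun y => WW (z - y) * Zq q W y) c z.
Definition Gamma (q delta rho beta : R) (W WW : R -> R) (dX : R) (a b : R) : R :=
  delta * ZZq q WW a - q * rho - q * beta * rtilde q delta W WW dX (b - a) b.

Definition min_is_zero (G : R -> R -> R) (b : R) : Prop :=
  (exists a, 0 <= a <= b /\ G a b = 0) /\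
  (forall a, 0 <= a <= b -> 0 <= G a b).

Definition selected_pair (G : R -> R -> R) (a b : R) : Prop :=
  (G 0 0 <= 0 /\ a = 0 /\ b = 0) \/
  (0 < G 0 0 /\ 0 < b /\ min_is_zero G b /\
   (forall b', 0 <= b' -> min_is_zero G b' -> b' = b) /\
   0 <= a <= b /\ (forall a', 0 <= a' <= b -> G a b <= G a' b) /\
   (forall a', 0 <= a' <= b -> (forall a'', 0 <= a'' <= b -> G a' b <= G a'' b) -> a' = a)).

From Stdlib Require Import Reals Lra ClassicalEpsilon Classical.
From Coquelicot Require Import Coquelicot.
Open Scope R_scope.

(* Whether the selected pair is trivial is decided by the sign of
   Gamma(0,0) = delta - q rho - beta psi_X'(0+).  Otherwise b > 0 and Gamma(a,b) = 0
   at the minimiser a.  For b in a bounded range rtilde is bounded, so for small beta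
   Gamma stays near delta - q rho > 0 when q rho < delta: hence b -> oo.  In the
   critical case q rho = delta, writing psi_X'(0+)/q = -Zbar(bl), the equation reads
     delta q int_0^a WW + q beta (Zbar bl - Zbar b) = q beta delta int_(b-a)^b WW(b-y) Z(y) dy,
   whose right side is O(beta a); since Zbar has slope >= 1 and WW > 0 on (0, oo),
   this forces a -> 0 and then b -> bl.
   The analytic input is that scale functions are nonnegative and increasing; W(0) >= 0
   follows from the positivity of their Laplace transform 1/(psi t - q) for large t,
   psi being convex and unbounded. *)

Lemma Rint_cases f a b :
  (ex_RInt f a b /\ Rint f a b = RInt f a b) \/ (~ ex_RInt f a b /\ Rint f a b = 0).
Proof.
  unfold Rint. destruct (excluded_middle_informative _) as [H|H].
  - left. destruct (constructive_indefinite_description _ _) as [pr HH]; simpl; clear HH.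
    split; [now apply ex_RInt_Reals_1 | now rewrite (RInt_Reals f a b pr)].
  - right. split; [|reflexivity]. intro E. apply H. constructor. now apply ex_RInt_Reals_0.
Qed.

Lemma Rint_RInt f a b : ex_RInt f a b -> Rint f a b = RInt f a b.
Proof. intro E; destruct (Rint_cases f a b) as [[_ H]|[H _]]; tauto. Qed.

Lemma Rint_point f a : Rint f a a = 0.
Proof. rewrite Rint_RInt by apply ex_RInt_point. exact (RInt_point a f). Qed.

Lemma Rint_chasles f a b c : ex_RInt f a b -> ex_RInt f b c ->
  Rint f a c = Rint f a b + Rint f b c.
Proof.
  intros E1 E2. rewrite !Rint_RInt; auto.
  - symmetry; exact (RInt_Chasles f a b c E1 E2).
  - eapply ex_RInt_Chasles; eauto.
Qed.

Lemma Rint_le f g a b : a <= b -> ex_RInt f a b -> ex_RInt g a b ->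
  (forall x, a <= x <= b -> f x <= g x) -> Rint f a b <= Rint g a b.
Proof. intros. rewrite !Rint_RInt; auto. apply RInt_le; auto. intros; apply H2; lra. Qed.

Lemma Rint_scal f a b k : ex_RInt f a b -> Rint (fun x => k * f x) a b = k * Rint f a b.
Proof.
  intros E. rewrite !Rint_RInt; auto.
  - apply (RInt_scal f a b k E).
  - apply (ex_RInt_scal f a b k E).
Qed.

Lemma Rint_ub_ex f a b K : a <= b -> ex_RInt f a b ->
  (forall x, a <= x <= b -> f x <= K) -> Rint f a b <= K * (b - a).
Proof.
  intros Hab E Hf. rewrite Rint_RInt by auto.
  apply Rle_trans with (RInt (fun _ => K) a b).
  - apply RInt_le; auto using ex_RInt_const. intros; apply Hf; lra.
  - rewrite RInt_const. apply Req_le, Rmult_comm.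
Qed.

Lemma Rint_lb_ex f a b K : a <= b -> ex_RInt f a b ->
  (forall x, a <= x <= b -> K <= f x) -> K * (b - a) <= Rint f a b.
Proof.
  intros Hab E Hf. rewrite Rint_RInt by auto.
  apply Rle_trans with (RInt (fun _ => K) a b).
  - rewrite RInt_const. apply Req_le, Rmult_comm.
  - apply RInt_le; auto using ex_RInt_const. intros; apply Hf; lra.
Qed.

(* Without integrability [Rint] is 0, which is still below [K * (b - a)] when [K >= 0]. *)
Lemma Rint_ub f a b K : a <= b -> 0 <= K ->
  (forall x, a <= x <= b -> f x <= K) -> Rint f a b <= K * (b - a).
Proof.
  intros Hab HK Hf. destruct (Rint_cases f a b) as [[E _]|[_ ->]].
  - now apply Rint_ub_ex.
  - nra.
Qed.

Lemma Rint_nonneg f a b : a <= b -> (forall x, a <= x <= b -> 0 <= f x) -> 0 <= Rint f a b.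
Proof.
  intros Hab Hf. destruct (Rint_cases f a b) as [[E _]|[_ ->]]; [|lra].
  rewrite <- (Rmult_0_l (b - a)). now apply Rint_lb_ex.
Qed.

Definition cont_on_nonneg (f : R -> R) : Prop :=
  forall x, 0 <= x -> limit1_in f (fun y => 0 <= y) (f x) x.

Definition clamp0 (f : R -> R) (x : R) : R := f (Rmax 0 x).

Lemma clamp0_continuous f : cont_on_nonneg f -> forall x, continuity_pt (clamp0 f) x.
Proof.
  intros Hf x eps Heps. destruct (Hf (Rmax 0 x) (Rmax_l _ _) eps Heps) as [alp [Ha H]].
  exists alp; split; auto. intros y [_ Hy]. apply H. split; [apply Rmax_l|].
  simpl in *; unfold R_dist in *. eapply Rle_lt_trans; [|exact Hy].
  unfold Rmax; destruct (Rle_dec 0 y), (Rle_dec 0 x); unfold Rabs;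
    repeat destruct Rcase_abs; lra.
Qed.

Lemma ex_RInt_nonneg_ext g f a b : (forall x, continuity_pt g x) ->
  (forall x, 0 <= x -> g x = f x) -> 0 <= a -> 0 <= b -> ex_RInt f a b.
Proof.
  intros Hg Hgf Ha Hb. apply ex_RInt_ext with g.
  - intros x Hx. apply Hgf. apply Rle_trans with (Rmin a b); [|lra].
    unfold Rmin; destruct Rle_dec; lra.
  - apply (@ex_RInt_continuous R_CompleteNormedModule). intros z _.
    apply continuity_pt_filterlim, Hg.
Qed.

Lemma ex_RInt_cont_nonneg f a b : cont_on_nonneg f -> 0 <= a -> 0 <= b -> ex_RInt f a b.
Proof.
  intros Hf. apply ex_RInt_nonneg_ext with (clamp0 f); [now apply clamp0_continuous|].
  intros x Hx. unfold clamp0. now rewrite Rmax_right.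
Qed.

Lemma exp_le_of_le x y : x <= y -> exp x <= exp y.
Proof. intros [H | ->]; [now apply Rlt_le, exp_increasing | lra]. Qed.

Lemma nondecreasing_of_derivative_nonneg (f f' : R -> R) (a : R) :
  (forall z, a <= z -> derivable_pt_lim f z (f' z)) -> (forall z, a <= z -> 0 <= f' z) ->
  forall x y, a <= x <= y -> f x <= f y.
Proof.
  intros Hd Hpos x y [Hax [Hxy | ->]]; [|lra].
  destruct (MVT_cor2 f f' x y Hxy) as [c [Hc Hcxy]]; [intros; apply Hd; lra|].
  pose proof (Hpos c ltac:(lra)). nra.
Qed.

Lemma unbounded_of_nondecreasing_derivative (f f' : R -> R) (s t1 : R) :
  0 < s < t1 -> (forall z, 0 < z -> derivable_pt_lim f z (f' z)) ->
  (forall x y, 0 < x <= y -> f' x <= f' y) -> f s < f t1 ->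
  forall T0 K, exists t, T0 < t /\ K < f t.
Proof.
  intros Hst Hd Hmono Hlt T0 K.
  destruct (MVT_cor2 f f' s t1) as [c [Hc Hcs]]; [lra|intros; apply Hd; lra|].
  assert (Hc' : 0 < f' c) by nra.
  assert (Hline : forall t, c <= t -> f c + f' c * (t - c) <= f t).
  { intros t Ht.
    assert (Hg := nondecreasing_of_derivative_nonneg (fun z => f z - f' c * z)
                    (fun z => f' z - f' c) c).
    assert (f c - f' c * c <= f t - f' c * t); [|lra].
    apply Hg; [|intros z Hz; pose proof (Hmono c z ltac:(lra)); lra|lra].
    intros z Hz. apply derivable_pt_lim_minus; [apply Hd; lra|].
    replace (f' c) with (f' c * 1) at 2 by ring.
    apply derivable_pt_lim_scal, derivable_pt_lim_id. }
  set (r := (Rabs K + Rabs (f c)) / f' c).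
  assert (Hr : f' c * r = Rabs K + Rabs (f c)) by (unfold r; field; lra).
  exists (Rmax T0 c + r + 1).
  pose proof (Rmax_l T0 c). pose proof (Rmax_r T0 c).
  assert (0 <= r).
  { unfold r. pose proof (Rabs_pos K). pose proof (Rabs_pos (f c)).
    apply Rdiv_le_0_compat; lra. }
  split; [lra|].
  pose proof (Hline (Rmax T0 c + r + 1) ltac:(lra)).
  pose proof (Rle_abs K). pose proof (Rle_abs (- f c)). rewrite Rabs_Ropp in *.
  assert (f' c * r < f' c * (Rmax T0 c + r + 1 - c)) by (apply Rmult_lt_compat_l; lra).
  lra.
Qed.

Lemma laplace_exponent_unbounded psi m : spec_pos_laplace_exponent psi m ->
  forall T0 K, exists t, T0 < t /\ K < psi t.
Proof.
  intros [_ [[D [HD0 [HDd HD2]]] [Hlim [t1 [Ht1 Hp1]]]]] T0 K.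
  destruct (Hlim 1 Rlt_0_1) as [d [Hd Hd']].
  set (A := Rabs m + 1).
  assert (HA : 0 < A) by (unfold A; pose proof (Rabs_pos m); lra).
  set (s := Rmin (d / 2) (Rmin (t1 / 2) (psi t1 / (2 * A)))).
  assert (Hs1 : s <= d / 2) by apply Rmin_l.
  assert (Hs2 : s <= t1 / 2) by (eapply Rle_trans; [apply Rmin_r|apply Rmin_l]).
  assert (Hs3 : s * A <= psi t1 / 2).
  { apply Rle_trans with (psi t1 / (2 * A) * A).
    - apply Rmult_le_compat_r; [lra|]. eapply Rle_trans; [apply Rmin_r|apply Rmin_r].
    - right; field; lra. }
  assert (Hs0 : 0 < s).
  { unfold s. repeat apply Rmin_pos; try lra. apply Rdiv_lt_0_compat; lra. }
  assert (Hps : psi s < psi t1).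
  { specialize (Hd' s ltac:(lra)). apply Rabs_def2 in Hd'.
    pose proof (Rle_abs m).
    assert (psi s = psi s / s * s) by (field; lra). unfold A in *. nra. }
  assert (HD1 : forall x y, 0 < x <= y -> D 1%nat x <= D 1%nat y).
  { intros x y Hxy. apply (nondecreasing_of_derivative_nonneg _ (D 2%nat) x); [| |lra].
    - intros z Hz; apply HDd; lra.
    - intros z Hz. pose proof (HD2 0%nat z ltac:(lra)). simpl in *; lra. }
  destruct (unbounded_of_nondecreasing_derivative (D 0%nat) (D 1%nat) s t1
              ltac:(lra) (HDd 0%nat) HD1 ltac:(rewrite !HD0; lra) (Rmax T0 0) K)
    as [t [Ht HK]].
  pose proof (Rmax_l T0 0). pose proof (Rmax_r T0 0).
  exists t. rewrite <- HD0 by lra. split; lra.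
Qed.

Lemma ex_RInt_exp_mul W t a b : cont_on_nonneg W -> 0 <= a -> 0 <= b ->
  ex_RInt (fun x => exp (- t * x) * W x) a b.
Proof.
  intros HW. apply ex_RInt_nonneg_ext with (fun x => exp (- t * x) * clamp0 W x).
  - intros x. apply continuity_pt_mult; [reg|now apply clamp0_continuous].
  - intros x Hx. unfold clamp0. now rewrite Rmax_right.
Qed.

Lemma exp_neg_le s h t : 0 < h -> 0 < s -> - ln s / h <= t -> exp (- t * h) <= s.
Proof.
  intros Hh Hs Ht. rewrite <- (exp_ln s Hs). apply exp_le_of_le.
  apply Rmult_le_compat_r with (r := h) in Ht; [|lra].
  replace (- ln s / h * h) with (- ln s) in Ht by (field; lra). lra.
Qed.

Section LaplaceTail.

Variables (W : R -> R) (t1 L1 h : R).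
Hypothesis HWc : cont_on_nonneg W.
Hypothesis HWmono : forall x y, 0 <= x <= y -> W x <= W y.
Hypothesis Hh : 0 < h.
Hypothesis Ht1 : 0 < t1.
Hypothesis HW2h : W (2 * h) <= 0.
Hypothesis HL1 : forall eps, 0 < eps -> exists M, forall T, M < T ->
  Rabs (Rint (fun x => exp (- t1 * x) * W x) 0 T - L1) < eps.

Let F T := Rint (fun x => exp (- t1 * x) * W x) 0 T.

(* For [x >= x0], [exp (- t x) <= exp (- (t - t1) x0) * exp (- t1 x)] and [W x >= 0]. *)
Lemma laplace_integral_far_le x0 t T : 0 <= x0 -> 0 <= W x0 -> t1 <= t -> x0 <= T ->
  Rint (fun x => exp (- t * x) * W x) x0 T <= exp (- (t - t1) * x0) * (F T - F x0).
Proof.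
  intros Hx0 HWx0 Ht HT.
  assert (HFx0 : F T - F x0 = Rint (fun x => exp (- t1 * x) * W x) x0 T).
  { unfold F. rewrite (Rint_chasles _ 0 x0 T); try (apply ex_RInt_exp_mul; auto; lra). ring. }
  rewrite HFx0, <- Rint_scal by (apply ex_RInt_exp_mul; auto; lra).
  apply Rint_le; [lra|apply ex_RInt_exp_mul; auto; lra| |].
  - apply (ex_RInt_scal (V := R_NormedModule)). apply ex_RInt_exp_mul; auto; lra.
  - intros x Hx. pose proof (HWmono x0 x ltac:(lra)).
    replace (exp (- t * x)) with (exp (- (t - t1) * x) * exp (- t1 * x))
      by (rewrite <- exp_plus; f_equal; ring).
    assert (exp (- (t - t1) * x) <= exp (- (t - t1) * x0)) by (apply exp_le_of_le; nra).
    pose proof (exp_pos (- t1 * x)). pose proof (exp_pos (- (t - t1) * x)).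
    assert (0 <= exp (- t1 * x) * W x) by nra. nra.
Qed.

Lemma laplace_integral_tail_le : exists K T1, 0 <= K /\ h <= T1 /\
  forall t T, t1 <= t -> T1 <= T ->
  Rint (fun x => exp (- t * x) * W x) h T <= exp (- t * (2 * h)) * K.
Proof.
  destruct (classic (exists x0, 0 <= x0 /\ 0 < W x0)) as [[x0 [Hx0 HWx0]] | Hnone].
  2: { exists 0, h. split; [lra|split; [lra|]]. intros t T Ht HT.
       rewrite Rmult_0_r, <- (Rmult_0_l (T - h)).
       apply Rint_ub; [lra|lra|]. intros x Hx.
       assert (W x <= 0) by (apply Rnot_lt_le; intro; apply Hnone; exists x; split; lra).
       pose proof (exp_pos (- t * x)). nra. }
  assert (Hx0h : 2 * h < x0).
  { apply Rnot_le_lt. intro. pose proof (HWmono x0 (2 * h) ltac:(lra)). lra. }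
  destruct (HL1 1 Rlt_0_1) as [M1 HM1].
  set (C1 := Rabs L1 + 1 + Rabs (F x0)).
  assert (HC1 : 0 <= C1).
  { unfold C1. pose proof (Rabs_pos L1). pose proof (Rabs_pos (F x0)). lra. }
  exists (W x0 * x0 + exp (t1 * (2 * h)) * C1), (Rmax x0 (M1 + 1)).
  pose proof (Rmax_l x0 (M1 + 1)). pose proof (Rmax_r x0 (M1 + 1)).
  pose proof (exp_pos (t1 * (2 * h))).
  split; [nra|split; [lra|]]. intros t T Ht HT.
  set (e := exp (- t * (2 * h))). assert (He : 0 < e) by apply exp_pos.
  rewrite (Rint_chasles _ h x0 T); try (apply ex_RInt_exp_mul; auto; lra).
  assert (Hnear : Rint (fun x => exp (- t * x) * W x) h x0 <= e * W x0 * (x0 - h)).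
  { apply Rint_ub; [lra|nra|]. intros x Hx. pose proof (exp_pos (- t * x)).
    destruct (Rle_lt_dec (W x) 0); [nra|].
    assert (2 * h < x) by (apply Rnot_le_lt; intro; pose proof (HWmono x (2 * h) ltac:(lra)); lra).
    assert (exp (- t * x) <= e) by (apply exp_le_of_le; nra).
    pose proof (HWmono x x0 ltac:(lra)). nra. }
  assert (Hfar := laplace_integral_far_le x0 t T Hx0 ltac:(lra) Ht ltac:(lra)).
  assert (HFT : F T - F x0 <= C1).
  { specialize (HM1 T ltac:(lra)). apply Rabs_def2 in HM1.
    pose proof (Rle_abs L1). pose proof (Rle_abs (- F x0)). rewrite Rabs_Ropp in *.
    unfold C1, F in *. lra. }
  assert (Hdecay : exp (- (t - t1) * x0) <= e * exp (t1 * (2 * h))).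
  { unfold e. rewrite <- exp_plus. apply exp_le_of_le. nra. }
  pose proof (exp_pos (- (t - t1) * x0)).
  assert (exp (- (t - t1) * x0) * (F T - F x0) <= e * exp (t1 * (2 * h)) * C1).
  { apply Rle_trans with (exp (- (t - t1) * x0) * C1); [nra|]. nra. }
  assert (0 <= e * W x0) by nra.
  assert (e * W x0 * (x0 - h) <= e * W x0 * x0) by nra.
  nra.
Qed.

Lemma laplace_integral_head_le t : 0 <= t ->
  Rint (fun x => exp (- t * x) * W x) 0 h <= W (2 * h) * exp (- t * h) * (h - 0).
Proof.
  intros Ht. apply Rint_ub_ex; [lra|apply ex_RInt_exp_mul; auto; lra|].
  intros x Hx. assert (exp (- t * h) <= exp (- t * x)) by (apply exp_le_of_le; nra).
  pose proof (HWmono x (2 * h) ltac:(lra)). pose proof (exp_pos (- t * x)). nra.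
Qed.

End LaplaceTail.

Lemma cont_on_nonneg_neg_near_0 f : cont_on_nonneg f -> f 0 < 0 -> exists h, 0 < h /\ f h < 0.
Proof.
  intros Hf Hf0. destruct (Hf 0 (Rle_refl 0) (- f 0 / 2) ltac:(lra)) as [alp [Halp Hal]].
  exists (alp / 2). split; [lra|].
  assert (HH : R_dist (f (alp / 2)) (f 0) < - f 0 / 2).
  { apply Hal. simpl; unfold R_dist. split; [lra|]. rewrite Rminus_0_r, Rabs_pos_eq; lra. }
  unfold R_dist in HH. apply Rabs_def2 in HH. lra.
Qed.

(* If [W 0 < 0], then [W <= -c] near 0 and the Laplace transform of [W] at a large [t]
   is dominated by this negative part, contradicting [1 / (psi t - q) > 0]. *)
Lemma scale_function_nonneg_at_0 psi q W : is_scale_function psi q W ->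
  (forall T0, exists t, T0 < t /\ q < psi t) -> 0 <= W 0.
Proof.
  intros [_ [HWc [HWinc [t0 HL]]]] Hgrow.
  assert (HWmono : forall x y, 0 <= x <= y -> W x <= W y).
  { intros x y [Hx [Hxy | ->]]; [apply Rlt_le, HWinc; lra|lra]. }
  apply Rnot_lt_le. intro HW0.
  destruct (cont_on_nonneg_neg_near_0 W HWc HW0) as [h2 [Hh2 HWh2]].
  set (h := h2 / 2). assert (Hh : 0 < h) by (unfold h; lra).
  assert (HW2h : W (2 * h) < 0) by (unfold h; replace (2 * (h2 / 2)) with h2 by field; lra).
  set (c := - W (2 * h)). assert (Hc : 0 < c) by (unfold c; lra).
  set (t1 := Rabs t0 + 1).
  assert (Ht1 : t0 < t1) by (unfold t1; pose proof (Rle_abs t0); lra).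
  assert (Ht1p : 0 < t1) by (unfold t1; pose proof (Rabs_pos t0); lra).
  destruct (laplace_integral_tail_le W t1 (/ (psi t1 - q)) h HWc HWmono Hh Ht1p
              ltac:(lra) (HL t1 Ht1)) as [K [T1 [HK [HT1 Htail]]]].
  set (s := c * h / (2 * (K + 1))).
  assert (Hs : 0 < s) by (unfold s; apply Rdiv_lt_0_compat; nra).
  destruct (Hgrow (Rmax t1 (- ln s / h))) as [t [Ht Hpt]].
  pose proof (Rmax_l t1 (- ln s / h)). pose proof (Rmax_r t1 (- ln s / h)).
  set (u := exp (- t * h)).
  assert (Hu : 0 < u) by apply exp_pos.
  assert (Hus : u <= s) by (apply exp_neg_le; lra).
  assert (HuK : u * K <= c * h / 2).
  { apply Rle_trans with (s * K); [nra|]. unfold s.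
    apply Rmult_le_reg_r with (2 * (K + 1)); [lra|].
    replace (c * h / (2 * (K + 1)) * K * (2 * (K + 1))) with (c * h * K) by (field; lra).
    nra. }
  assert (Hu2 : exp (- t * (2 * h)) = u * u) by (unfold u; rewrite <- exp_plus; f_equal; ring).
  set (L := / (psi t - q)).
  assert (HLp : 0 < L) by (unfold L; apply Rinv_0_lt_compat; lra).
  destruct (HL t ltac:(lra) L HLp) as [M HM].
  set (T := Rmax (M + 1) T1).
  pose proof (Rmax_l (M + 1) T1). pose proof (Rmax_r (M + 1) T1).
  specialize (HM T ltac:(unfold T; lra)). fold L in HM. apply Rabs_def2 in HM.
  rewrite (Rint_chasles _ 0 h T) in HM; try (apply ex_RInt_exp_mul; auto; unfold T; lra).
  assert (Hhead := laplace_integral_head_le W h HWc HWmono Hh ltac:(lra) t ltac:(lra)).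
  fold u in Hhead. replace (W (2 * h)) with (- c) in Hhead by (unfold c; ring).
  specialize (Htail t T ltac:(lra) ltac:(unfold T; lra)). rewrite Hu2 in Htail.
  assert (u * u * K <= u * (c * h / 2)) by nra.
  nra.
Qed.

Record regular_scale (W : R -> R) : Prop := {
  regular_scale_cont : cont_on_nonneg W;
  regular_scale_at0 : 0 <= W 0;
  regular_scale_lt : forall x y, 0 <= x -> x < y -> W x < W y }.

Lemma regular_scale_of psi q W : is_scale_function psi q W ->
  (forall T0, exists t, T0 < t /\ q < psi t) -> regular_scale W.
Proof.
  intros HW Hgrow. pose proof (scale_function_nonneg_at_0 psi q W HW Hgrow).
  destruct HW as [_ [Hc [Hlt _]]]. now constructor.
Qed.

Section RegularScale.

Variable W : R -> R.
Hypothesis HW : regular_scale W.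

Lemma regular_scale_le x y : 0 <= x <= y -> W x <= W y.
Proof. intros [Hx [Hxy | ->]]; [now apply Rlt_le, (regular_scale_lt W HW)|lra]. Qed.

Lemma regular_scale_nonneg x : 0 <= x -> 0 <= W x.
Proof.
  intros Hx. apply Rle_trans with (W 0); [apply (regular_scale_at0 W HW)|].
  apply regular_scale_le; lra.
Qed.

Lemma regular_scale_ex a b : 0 <= a -> 0 <= b -> ex_RInt W a b.
Proof. apply ex_RInt_cont_nonneg, (regular_scale_cont W HW). Qed.

Lemma Rint_regular_scale_nonneg a : 0 <= a -> 0 <= Rint W 0 a.
Proof. intros Ha. apply Rint_nonneg; [lra|]. intros; apply regular_scale_nonneg; lra. Qed.

Lemma Rint_regular_scale_small h : 0 < h -> exists k, 0 < k /\
  forall a, 0 <= a -> Rint W 0 a < k -> a < h.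
Proof.
  intros Hh. assert (Hpos : 0 < W (h / 2)).
  { apply Rle_lt_trans with (W 0); [apply (regular_scale_at0 W HW)|].
    apply (regular_scale_lt W HW); lra. }
  exists (h / 2 * W (h / 2)). split; [nra|]. intros a Ha Hsmall.
  apply Rnot_le_lt. intro Hha. apply (Rlt_not_le _ _ Hsmall).
  rewrite (Rint_chasles _ 0 (h / 2) a) by (apply regular_scale_ex; lra).
  pose proof (Rint_regular_scale_nonneg (h / 2) ltac:(lra)).
  assert (W (h / 2) * (a - h / 2) <= Rint W (h / 2) a).
  { apply Rint_lb_ex; [lra|apply regular_scale_ex; lra|].
    intros; apply regular_scale_le; lra. }
  nra.
Qed.

End RegularScale.

Section ZFunctions.

Variables (q : R) (W : R -> R).
Hypothesis Hq : 0 < q.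
Hypothesis HW : regular_scale W.

Lemma Zq_ge1 y : 0 <= y -> 1 <= Zq q W y.
Proof. intros Hy. unfold Zq. pose proof (Rint_regular_scale_nonneg W HW y Hy). nra. Qed.

Lemma Zq_le x y : 0 <= x <= y -> Zq q W x <= Zq q W y.
Proof.
  intros Hxy. unfold Zq.
  rewrite (Rint_chasles W 0 x y) by (apply regular_scale_ex; auto; lra).
  assert (0 <= Rint W x y); [|nra].
  apply Rint_nonneg; [lra|]. intros; apply regular_scale_nonneg; auto; lra.
Qed.

(* On [0, oo), [Zq q W] agrees with a primitive of the continuous [clamp0 W]. *)
Lemma Zq_ex a b : 0 <= a -> 0 <= b -> ex_RInt (Zq q W) a b.
Proof.
  assert (Hc := clamp0_continuous W (regular_scale_cont W HW)).
  assert (Hex : forall u v, ex_RInt (clamp0 W) u v).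
  { intros u v. apply (@ex_RInt_continuous R_CompleteNormedModule). intros z _.
    apply continuity_pt_filterlim, Hc. }
  apply ex_RInt_nonneg_ext with (fun y => 1 + q * RInt (clamp0 W) 0 y).
  - intros x. apply continuity_pt_plus; [apply continuity_pt_const; now intros ? ?|].
    apply continuity_pt_mult; [apply continuity_pt_const; now intros ? ?|].
    assert (Hd : ex_derive (RInt (clamp0 W) 0) x).
    { exists (clamp0 W x). apply is_derive_RInt with 0; [|apply continuity_pt_filterlim, Hc].
      exists (mkposreal 1 Rlt_0_1). intros y _. apply RInt_correct, Hex. }
    apply continuity_pt_filterlim. exact (ex_derive_continuous _ _ Hd).
  - intros x Hx. unfold Zq. rewrite Rint_RInt by (apply regular_scale_ex; auto; lra).
    f_equal. f_equal. apply RInt_ext. intros z Hz. unfold clamp0.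
    rewrite Rmax_right; [reflexivity|]. revert Hz. unfold Rmin; destruct Rle_dec; lra.
Qed.

Lemma Zbarq_sub_ge u v : 0 <= u <= v -> v - u <= Zbarq q W v - Zbarq q W u.
Proof.
  intros Huv. unfold Zbarq.
  rewrite (Rint_chasles _ 0 u v) by (apply Zq_ex; lra).
  assert (1 * (v - u) <= Rint (Zq q W) u v); [|lra].
  apply Rint_lb_ex; [lra|apply Zq_ex; lra|]. intros; apply Zq_ge1; lra.
Qed.

Lemma Zbarq_le b N : 0 <= b <= N -> Zbarq q W b <= Zq q W N * N.
Proof.
  intros Hb. unfold Zbarq. pose proof (Zq_ge1 N ltac:(lra)).
  apply Rle_trans with (Zq q W N * (b - 0)); [|nra].
  apply Rint_ub; [lra|lra|]. intros; apply Zq_le; lra.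
Qed.

Lemma Rint_conv_le WW a b N : regular_scale WW -> 0 <= a <= b -> b <= N ->
  Rint (fun y => WW (b - y) * Zq q W y) (b - a) b <= WW a * Zq q W N * a.
Proof.
  intros HWW Hab HbN. pose proof (Zq_ge1 N ltac:(lra)).
  pose proof (regular_scale_nonneg WW HWW a ltac:(lra)).
  replace a with (b - (b - a)) at 3 by ring.
  apply Rint_ub; [lra|nra|]. intros y Hy.
  pose proof (regular_scale_nonneg WW HWW (b - y) ltac:(lra)).
  pose proof (regular_scale_le WW HWW (b - y) a ltac:(lra)).
  pose proof (Zq_ge1 y ltac:(lra)). pose proof (Zq_le y N ltac:(lra)).
  nra.
Qed.

End ZFunctions.

Lemma Gamma_00 q delta rho beta W WW dX : q <> 0 ->
  Gamma q delta rho beta W WW dX 0 0 = delta - q * rho - beta * dX.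
Proof.
  intros Hq. unfold Gamma, rtilde, Rq, ZZq, Zbarq.
  rewrite Rminus_0_r, !Rint_point. field. exact Hq.
Qed.

Lemma Gamma_ge q delta rho beta W WW dX a b : 0 < q -> 0 <= delta -> regular_scale WW ->
  0 <= a -> delta - q * rho - q * beta * rtilde q delta W WW dX (b - a) b
           <= Gamma q delta rho beta W WW dX a b.
Proof.
  intros Hq Hd HWW Ha. unfold Gamma, ZZq.
  pose proof (Rint_regular_scale_nonneg WW HWW a Ha).
  assert (0 <= delta * (q * Rint WW 0 a)) by (apply Rmult_le_pos; [|apply Rmult_le_pos]; lra).
  lra.
Qed.

Lemma rtilde_le q delta W WW dX a b N : 0 < q -> 0 <= delta ->
  regular_scale W -> regular_scale WW -> 0 <= a <= b -> b <= N ->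
  rtilde q delta W WW dX (b - a) b
    <= Zq q W N * N + dX / q + delta * (WW N * Zq q W N * N).
Proof.
  intros Hq Hd HW HWW Hab HbN. unfold rtilde, Rq.
  pose proof (Zbarq_le q W Hq HW b N ltac:(lra)).
  pose proof (Rint_conv_le q W Hq HW WW a b N HWW Hab HbN).
  pose proof (Zq_ge1 q W Hq HW N ltac:(lra)).
  pose proof (regular_scale_nonneg WW HWW a ltac:(lra)).
  pose proof (regular_scale_le WW HWW a N ltac:(lra)).
  assert (WW a * Zq q W N * a <= WW N * Zq q W N * N).
  { apply Rmult_le_compat; [nra|lra|apply Rmult_le_compat_r; lra|lra]. }
  nra.
Qed.

Lemma selected_pair_pos G a b : selected_pair G a b -> 0 < G 0 0 ->
  0 < b /\ 0 <= a <= b /\ G a b = 0 /\ forall a', 0 <= a' <= b -> 0 <= G a' b.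
Proof.
  intros [[H _]|[_ [Hb [[[a0 [Ha0 Hz]] Hge] [_ [Ha [Hmin _]]]]]]] Hp; [lra|].
  split; [exact Hb|split; [exact Ha|split; [|exact Hge]]].
  pose proof (Hmin a0 Ha0). pose proof (Hge a Ha). lra.
Qed.

Lemma selected_pair_zero G a b : selected_pair G a b -> G 0 0 <= 0 -> a = 0 /\ b = 0.
Proof. intros [[_ [H1 H2]]|[H _]] Hp; [auto|lra]. Qed.

Lemma small_beta g x : 0 < g ->
  exists beta0, 0 < beta0 /\ forall beta, 0 < beta < beta0 -> beta * x < g.
Proof.
  intros Hg. pose proof (Rabs_pos x). pose proof (Rle_abs x).
  exists (g / (Rabs x + 1)). split; [apply Rdiv_lt_0_compat; lra|].
  intros beta [Hb0 Hb1].
  apply Rmult_lt_compat_r with (r := Rabs x + 1) in Hb1; [|lra].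
  replace (g / (Rabs x + 1) * (Rabs x + 1)) with g in Hb1 by (field; lra).
  nra.
Qed.

Lemma selected_b_unbounded q delta rho W WW dX : 0 < q -> 0 < delta ->
  regular_scale W -> regular_scale WW -> q * rho < delta ->
  forall M, exists beta0, 0 < beta0 /\ forall beta, 0 < beta < beta0 ->
    forall a b, selected_pair (Gamma q delta rho beta W WW dX) a b -> M < b.
Proof.
  intros Hq Hd HW HWW Hr M.
  pose proof (Rmax_l M 0). pose proof (Rmax_r M 0). set (N := Rmax M 0) in *.
  set (Rb := Zq q W N * N + dX / q + delta * (WW N * Zq q W N * N)).
  destruct (small_beta (delta - q * rho) (Rmax dX (q * Rb)) ltac:(lra)) as [beta0 [Hb0 Hsmall]].
  exists beta0. split; [exact Hb0|]. intros beta Hbeta a b Hsel.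
  specialize (Hsmall beta Hbeta).
  assert (HdX : beta * dX <= beta * Rmax dX (q * Rb))
    by (apply Rmult_le_compat_l; [lra|apply Rmax_l]).
  assert (HRb : beta * (q * Rb) <= beta * Rmax dX (q * Rb))
    by (apply Rmult_le_compat_l; [lra|apply Rmax_r]).
  destruct (selected_pair_pos _ a b Hsel) as [Hb [Ha [Hz _]]].
  { rewrite Gamma_00 by lra. lra. }
  apply Rnot_le_lt. intro HbM.
  pose proof (Gamma_ge q delta rho beta W WW dX a b Hq ltac:(lra) HWW ltac:(lra)).
  assert (q * beta * rtilde q delta W WW dX (b - a) b <= beta * (q * Rb)).
  { replace (beta * (q * Rb)) with (q * beta * Rb) by ring.
    apply Rmult_le_compat_l; [apply Rmult_le_pos; lra|]. apply rtilde_le; auto; lra. }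
  lra.
Qed.

Lemma selected_pair_eventually_zero q delta rho W WW dX : q <> 0 -> delta < q * rho ->
  exists beta0, 0 < beta0 /\ forall beta, 0 < beta < beta0 ->
    forall a b, selected_pair (Gamma q delta rho beta W WW dX) a b -> a = 0 /\ b = 0.
Proof.
  intros Hq Hgt.
  destruct (small_beta (q * rho - delta) (- dX)) as [beta0 [Hb0 Hsmall]]; [lra|].
  exists beta0. split; [exact Hb0|]. intros beta Hbeta a b Hs.
  apply (selected_pair_zero _ _ _ Hs). rewrite Gamma_00 by exact Hq.
  specialize (Hsmall beta Hbeta). lra.
Qed.

Section Critical.

Variables (q delta rho : R) (W WW : R -> R) (dX bl : R).
Hypothesis Hq : 0 < q.
Hypothesis Hdelta : 0 < delta.
Hypothesis HW : regular_scale W.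
Hypothesis HWW : regular_scale WW.
Hypothesis Hrho : q * rho = delta.
Hypothesis HdX : dX < 0.
Hypothesis Hbl : 0 <= bl.
Hypothesis Hzbl : Zbarq q W bl = - dX / q.

Lemma Gamma_critical beta a b : Gamma q delta rho beta W WW dX a b =
  delta * q * Rint WW 0 a - q * beta * (Zbarq q W b - Zbarq q W bl)
  - q * beta * delta * Rint (fun y => WW (b - y) * Zq q W y) (b - a) b.
Proof.
  unfold Gamma, rtilde, Rq, ZZq.
  replace (dX / q) with (- Zbarq q W bl) by (rewrite Hzbl; field; lra).
  rewrite Hrho. ring.
Qed.

Lemma selected_critical_bounds beta a b : 0 < beta ->
  selected_pair (Gamma q delta rho beta W WW dX) a b ->
  0 <= a /\ b <= bl /\ Rint WW 0 a <= beta * (WW bl * Zq q W bl) * bl /\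
  bl - b <= delta * (WW bl * Zq q W bl) * a.
Proof.
  intros Hbeta Hsel.
  destruct (selected_pair_pos _ a b Hsel) as [Hb [Ha [Hz Hmin]]].
  { rewrite Gamma_00 by lra. nra. }
  assert (Hbbl : b <= bl).
  { apply Rnot_lt_le. intro Hlt. pose proof (Hmin 0 ltac:(lra)) as H0.
    rewrite Gamma_critical, Rminus_0_r, !Rint_point in H0.
    pose proof (Zbarq_sub_ge q W Hq HW bl b ltac:(lra)).
    assert (0 < q * beta * (Zbarq q W b - Zbarq q W bl))
      by (apply Rmult_lt_0_compat; [apply Rmult_lt_0_compat|]; lra).
    lra. }
  set (A := WW bl * Zq q W bl).
  set (J := Rint (fun y => WW (b - y) * Zq q W y) (b - a) b).
  assert (HJ : J <= A * a).
  { apply Rle_trans with (WW a * Zq q W bl * a); [now apply Rint_conv_le|].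
    pose proof (Zq_ge1 q W Hq HW bl Hbl).
    pose proof (regular_scale_le WW HWW a bl ltac:(lra)).
    unfold A. apply Rmult_le_compat_r; [lra|]. apply Rmult_le_compat_r; lra. }
  assert (HA : 0 <= A).
  { unfold A. pose proof (Zq_ge1 q W Hq HW bl Hbl).
    pose proof (regular_scale_nonneg WW HWW bl Hbl). nra. }
  rewrite Gamma_critical in Hz. fold J in Hz.
  pose proof (Zbarq_sub_ge q W Hq HW b bl ltac:(lra)).
  pose proof (Rint_regular_scale_nonneg WW HWW a ltac:(lra)).
  assert (Hqb : 0 < q * beta) by (apply Rmult_lt_0_compat; lra).
  assert (HqbJ : q * beta * delta * J <= q * beta * delta * (A * a))
    by (apply Rmult_le_compat_l; [apply Rmult_le_pos|]; lra).
  assert (HZ : q * beta * (bl - b) <= q * beta * (Zbarq q W bl - Zbarq q W b))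
    by (apply Rmult_le_compat_l; lra).
  assert (HI0 : 0 <= delta * q * Rint WW 0 a)
    by (apply Rmult_le_pos; [apply Rmult_le_pos|]; lra).
  split; [lra|split; [lra|split]].
  - apply Rmult_le_reg_l with (delta * q); [apply Rmult_lt_0_compat; lra|].
    assert (HZ0 : 0 <= q * beta * (Zbarq q W bl - Zbarq q W b))
      by (apply Rmult_le_pos; lra).
    assert (Hab : q * beta * delta * (A * a) <= q * beta * delta * (A * bl))
      by (apply Rmult_le_compat_l; [apply Rmult_le_pos|apply Rmult_le_compat_l]; lra).
    lra.
  - apply Rmult_le_reg_l with (q * beta); [exact Hqb|]. lra.
Qed.

Lemma selected_critical_limit eps : 0 < eps -> exists beta0, 0 < beta0 /\
  forall beta, 0 < beta < beta0 -> forall a b,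
  selected_pair (Gamma q delta rho beta W WW dX) a b -> Rabs (b - bl) < eps /\ Rabs a < eps.
Proof.
  intros Heps. set (A := WW bl * Zq q W bl).
  assert (HA : 0 <= A).
  { unfold A. pose proof (Zq_ge1 q W Hq HW bl Hbl).
    pose proof (regular_scale_nonneg WW HWW bl Hbl). nra. }
  set (eta := Rmin eps (eps / (delta * A + 1))).
  assert (Heta1 : eta <= eps) by apply Rmin_l.
  assert (Heta2 : (delta * A + 1) * eta <= eps).
  { apply Rle_trans with ((delta * A + 1) * (eps / (delta * A + 1))).
    - apply Rmult_le_compat_l; [nra|apply Rmin_r].
    - right; field; nra. }
  assert (Heta : 0 < eta) by (apply Rmin_pos; [lra|apply Rdiv_lt_0_compat; nra]).
  destruct (Rint_regular_scale_small WW HWW eta Heta) as [k [Hk Hsmall]].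
  destruct (small_beta k (A * bl) Hk) as [beta0 [Hb0 Hbeta0]].
  exists beta0. split; [exact Hb0|]. intros beta Hbeta a b Hsel.
  destruct (selected_critical_bounds beta a b ltac:(lra) Hsel) as [Ha [Hbbl [HI HD]]].
  fold A in HI, HD.
  assert (Hae : a < eta) by (apply Hsmall; [exact Ha|]; specialize (Hbeta0 beta Hbeta); nra).
  rewrite Rabs_left1, Rabs_pos_eq by lra. nra.
Qed.

End Critical.

Theorem mainTheorem10
  (psiY : R -> R) (m q delta rho : R) (WW W : R -> R)
  (HY : spec_pos_laplace_exponent psiY m)
  (Hq : 0 < q) (Hdelta : 0 < delta)
  (HWW : is_scale_function psiY q WW)
  (HW : is_scale_function (fun t => psiY t + delta * t) q W) :
  let dX := m + delta in
  let sel := fun beta a b => selected_pair (Gamma q delta rho beta W WW dX) a b in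
  (q * rho / delta < 1 ->
     (exists beta0, 0 < beta0 /\ forall beta, 0 < beta < beta0 -> beta < 1 ->
        forall a b, sel beta a b -> 0 < b) /\
     (forall M, exists beta0, 0 < beta0 /\ forall beta, 0 < beta < beta0 -> beta < 1 ->
        forall a b, sel beta a b -> M < b)) /\
  (q * rho / delta > 1 ->
     exists beta0, 0 < beta0 /\ forall beta, 0 < beta < beta0 -> beta < 1 ->
        forall a b, sel beta a b -> a = 0 /\ b = 0) /\
  (q * rho / delta = 1 -> dX < 0 ->
     (forall beta, 0 < beta < 1 -> forall a b, sel beta a b -> 0 < b) /\
     (forall bl, 0 <= bl -> Zbarq q W bl = - dX / q ->
        forall eps, 0 < eps -> exists beta0, 0 < beta0 /\
          forall beta, 0 < beta < beta0 -> beta < 1 ->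
          forall a b, sel beta a b -> Rabs (b - bl) < eps /\ Rabs a < eps)) /\
  (q * rho / delta = 1 -> 0 <= dX ->
     forall beta, 0 < beta < 1 -> forall a b, sel beta a b -> a = 0 /\ b = 0).
Proof.
  cbv zeta. set (dX := m + delta).
  assert (Hgrow := laplace_exponent_unbounded psiY m HY).
  assert (RWW : regular_scale WW)
    by (apply (regular_scale_of psiY q WW HWW); intros; apply Hgrow).
  assert (RW : regular_scale W).
  { apply (regular_scale_of _ q W HW). intros T0.
    destruct (Hgrow (Rmax T0 0) q) as [t [Ht Hpt]]. exists t.
    pose proof (Rmax_l T0 0). pose proof (Rmax_r T0 0). split; nra. }
  assert (Hr : q * rho = q * rho / delta * delta) by (field; lra).
  split; [|split; [|split]].
  - intros H1. assert (Hlt : q * rho < delta).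
    { pose proof (Rmult_lt_compat_r delta _ _ Hdelta H1). lra. }
    assert (Hub := selected_b_unbounded q delta rho W WW dX Hq Hdelta RW RWW Hlt).
    split; [specialize (Hub 0)|intros M; specialize (Hub M)];
      destruct Hub as [beta0 [Hb0 Hb]]; exists beta0;
      (split; [exact Hb0|intros beta Hbeta _; exact (Hb beta Hbeta)]).
  - intros H2. assert (Hgt : delta < q * rho).
    { pose proof (Rmult_lt_compat_r delta _ _ Hdelta H2). lra. }
    destruct (selected_pair_eventually_zero q delta rho W WW dX ltac:(lra) Hgt)
      as [beta0 [Hb0 Hzero]].
    exists beta0. split; [exact Hb0|]. intros beta Hbeta _. exact (Hzero beta Hbeta).
  - intros H3 HdX. assert (Heq : q * rho = delta) by (rewrite Hr, H3; ring). split.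
    + intros beta Hbeta a b Hs. apply (selected_pair_pos _ a b Hs).
      rewrite Gamma_00 by lra. nra.
    + intros bl Hbl Hz eps Heps.
      destruct (selected_critical_limit q delta rho W WW dX bl Hq Hdelta RW RWW Heq HdX Hbl Hz
                  eps Heps) as [beta0 [Hb0 Hlim]].
      exists beta0. split; [exact Hb0|]. intros beta Hbeta _. exact (Hlim beta Hbeta).
  - intros H3 HdX beta Hbeta a b Hs. assert (Heq : q * rho = delta) by (rewrite Hr, H3; ring).
    apply (selected_pair_zero _ _ _ Hs). rewrite Gamma_00 by lra. nra.
Qed.
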